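(* Let $\mathcal A$ be an abelian category and let $0\to F\xrightarrow{i} M\xrightarrow{d} C\to 0$ be a fully invariant short exact sequence in $\mathcal A$. (1) $M$ is strongly self-$F$-split if and only if $M$ is self-$F$-split and every direct summand of $M$ which contains $F$ is fully invariant. (2) $M$ is dual strongly self-$F$-split if and only if $M$ is dual self-$F$-split and every direct summand of $M$ which is contained in $F$ is fully invariant.
   Context: Let $\mathcal A$ be an abelian category. A morphism $s:X\to Y$ is a section if $ts=1_X$ for some $t:Y\to X$, and a retraction if $st=1_Y$ for some $t$. A monomorphism $i:K\to M$ is fully invariant if for every morphism $h:M\to M$ there is $\alpha:K\to K$ with $hi=i\alpha$; an epimorphism $d:M\to C$ is fully coinvariant if for every $h:M\to M$ there is $\beta:C\to C$ with $dh=\beta d$. A subobject is fully invariant if its inclusion monomorphism is. A short exact sequence $0\to F\xrightarrow{i}N\xrightarrow{d}C\to 0$ is fully invariant if $i$ is fully invariant (equivalently $d$ is fully coinvariant). A (fully invariant) direct summand is a subobject whose inclusion is a (fully invariant) section. For an object $M$ and a fully invariant short exact sequence $0\to F\xrightarrow{i}N\xrightarrow{d}C\to 0$: $N$ is $M$-$F$-split (resp. strongly $M$-$F$-split) if for every morphism $g:M\to N$ the kernel $\ker(dg)$ (equivalently, the morphism $j:P\to M$ in the pullback of $i$ along $g$) is a section (resp. a fully invariant section); $N$ is dual $M$-$F$-split (resp. dual strongly $M$-$F$-split) if for every morphism $g:N\to M$ the cokernel $\mathrm{coker}(gi)$ (equivalently, the morphism $p:M\to Q$ in the pushout of $d$ along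 $g$) is a retraction (resp. a fully coinvariant retraction). $N$ is (dual) (strongly) self-$F$-split if it is (dual) (strongly) $N$-$F$-split. *)

From HB Require Import structures.
From mathcomp Require Import all_boot all_algebra.
Set Implicit Arguments. Unset Strict Implicit. Unset Printing Implicit Defensive.
Import GRing.Theory.
Local Open Scope ring_scope.

Record PreAdditiveCategory := {
  Obj :> Type;
  Arr : Obj -> Obj -> zmodType;
  comp : forall X Y Z : Obj, Arr Y Z -> Arr X Y -> Arr X Z;
  idm : forall X : Obj, Arr X X;
  comp_assoc : forall X Y Z W (f : Arr Z W) (g : Arr Y Z) (h : Arr X Y),
      comp f (comp g h) = comp (comp f g) h;
  comp_idl : forall X Y (f : Arr X Y), comp (idm Y) f = f;
  comp_idr : forall X Y (f : Arr X Y), comp f (idm X) = f;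
  comp_addl : forall X Y Z (f g : Arr Y Z) (h : Arr X Y),
      comp (f + g) h = comp f h + comp g h;
  comp_addr : forall X Y Z (f : Arr Y Z) (g h : Arr X Y),
      comp f (g + h) = comp f g + comp f h
}.

Arguments comp {_ X Y Z} f g.
Arguments idm {_} X.
Notation "f \o' g" := (comp f g) (at level 40, left associativity).

Section Notions.
Variable C : PreAdditiveCategory.

Definition is_mono {X Y : C} (f : Arr X Y) : Prop :=
  forall W (g h : Arr W X), f \o' g = f \o' h -> g = h.
Definition is_epi {X Y : C} (f : Arr X Y) : Prop :=
  forall W (g h : Arr Y W), g \o' f = h \o' f -> g = h.

Definition is_kernel {X Y K : C} (f : Arr X Y) (k : Arr K X) : Prop :=
  f \o' k = 0 /\
  forall W (g : Arr W X), f \o' g = 0 -> exists! h : Arr W K, k \o' h = g.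
Definition is_cokernel {X Y Q : C} (f : Arr X Y) (c : Arr Y Q) : Prop :=
  c \o' f = 0 /\
  forall W (g : Arr Y W), g \o' f = 0 -> exists! h : Arr Q W, h \o' c = g.

Definition has_zero_object : Prop := exists Z : C, idm Z = 0.
Definition has_biproducts : Prop :=
  forall X Y : C, exists (P : C) (i1 : Arr X P) (i2 : Arr Y P)
                         (p1 : Arr P X) (p2 : Arr P Y),
    [/\ p1 \o' i1 = idm X, p2 \o' i2 = idm Y, p1 \o' i2 = 0, p2 \o' i1 = 0
      & (i1 \o' p1) + (i2 \o' p2) = idm P].
Definition has_kernels : Prop :=
  forall (X Y : C) (f : Arr X Y), exists (K : C) (k : Arr K X), is_kernel f k.
Definition has_cokernels : Prop :=
  forall (X Y : C) (f : Arr X Y), exists (Q : C) (c : Arr Y Q), is_cokernel f c.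
Definition monos_are_kernels : Prop :=
  forall (X Y : C) (f : Arr X Y), is_mono f ->
    exists (Z : C) (g : Arr Y Z), is_kernel g f.
Definition epis_are_cokernels : Prop :=
  forall (X Y : C) (f : Arr X Y), is_epi f ->
    exists (Z : C) (g : Arr Z X), is_cokernel g f.

Definition is_abelian : Prop :=
  has_zero_object /\ has_biproducts /\ has_kernels /\ has_cokernels /\
  monos_are_kernels /\ epis_are_cokernels.

Definition is_section {X Y : C} (s : Arr X Y) : Prop :=
  exists t : Arr Y X, t \o' s = idm X.
Definition is_retraction {X Y : C} (s : Arr X Y) : Prop :=
  exists t : Arr Y X, s \o' t = idm Y.

Definition fully_invariant {K M : C} (i : Arr K M) : Prop :=
  is_mono i /\ forall h : Arr M M, exists a : Arr K K, h \o' i = i \o' a.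
Definition fully_coinvariant {M Q : C} (d : Arr M Q) : Prop :=
  is_epi d /\ forall h : Arr M M, exists b : Arr Q Q, d \o' h = b \o' d.

Definition short_exact {F N Q : C} (i : Arr F N) (d : Arr N Q) : Prop :=
  [/\ is_mono i, is_epi d, is_kernel d i & is_cokernel i d].
Definition fully_invariant_ses {F N Q : C} (i : Arr F N) (d : Arr N Q) : Prop :=
  short_exact i d /\ fully_invariant i.

(* N is M-F-split w.r.t. the sequence (i,d): for every g : M -> N, the
   kernel j : P -> M of d \o g is a section (any choice of kernel). *)
Definition M_F_split (M : C) {F N Q : C} (i : Arr F N) (d : Arr N Q) : Prop :=
  forall g : Arr M N, forall (P : C) (j : Arr P M),
    is_kernel (d \o' g) j -> is_section j.
Definition strongly_M_F_split (M : C) {F N Q : C} (i : Arr F N) (d : Arr N Q)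
  : Prop :=
  forall g : Arr M N, forall (P : C) (j : Arr P M),
    is_kernel (d \o' g) j -> is_section j /\ fully_invariant j.
Definition dual_M_F_split (M : C) {F N Q : C} (i : Arr F N) (d : Arr N Q)
  : Prop :=
  forall g : Arr N M, forall (Q' : C) (p : Arr M Q'),
    is_cokernel (g \o' i) p -> is_retraction p.
Definition dual_strongly_M_F_split (M : C) {F N Q : C} (i : Arr F N)
  (d : Arr N Q) : Prop :=
  forall g : Arr N M, forall (Q' : C) (p : Arr M Q'),
    is_cokernel (g \o' i) p -> is_retraction p /\ fully_coinvariant p.

Definition self_F_split {F N Q : C} (i : Arr F N) (d : Arr N Q) :=
  M_F_split N i d.
Definition strongly_self_F_split {F N Q : C} (i : Arr F N) (d : Arr N Q) :=
  strongly_M_F_split N i d.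
Definition dual_self_F_split {F N Q : C} (i : Arr F N) (d : Arr N Q) :=
  dual_M_F_split N i d.
Definition dual_strongly_self_F_split {F N Q : C} (i : Arr F N) (d : Arr N Q) :=
  dual_strongly_M_F_split N i d.

(* A direct summand of M is a subobject given by a section s : K -> M.
   It contains the subobject i : F -> M if i factors through s, and it is
   contained in F if s factors through i. *)
Definition direct_summand {K M : C} (s : Arr K M) : Prop := is_section s.
Definition sub_contains {K F M : C} (s : Arr K M) (i : Arr F M) : Prop :=
  exists u : Arr F K, s \o' u = i.

End Notions.

(* (1) A direct summand s with retraction t is the kernel of the idempotent
   e = 1 - s t.  If s contains F, then e kills F = ker d, so s is also the
   kernel of d e and strong self-F-splitness makes it fully invariant.
   Conversely, g maps F into itself, so the kernel of d g contains F.
   (2) Dually, a summand s inside F has the same cokernel as s t i, and a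
   summand with a fully coinvariant cokernel is fully invariant.  Conversely,
   the kernel of the cokernel of g i is a summand inside F, and the cokernel
   of a morphism is fully coinvariant as soon as its kernel is fully
   invariant. *)
From HB Require Import structures.
From mathcomp Require Import all_boot all_algebra.
Set Implicit Arguments. Unset Strict Implicit. Unset Printing Implicit Defensive.
Import GRing.Theory.
Local Open Scope ring_scope.

Section AdditiveCategory.
Variable A : PreAdditiveCategory.
Implicit Types X Y Z W K M Q : A.

Lemma compBr X Y Z (f : Arr Y Z) (g h : Arr X Y) :
  f \o' (g - h) = f \o' g - f \o' h.
Proof. by apply/eqP; rewrite eq_sym subr_eq -comp_addr subrK. Qed.

Lemma compBl X Y Z (f g : Arr Y Z) (h : Arr X Y) :
  (f - g) \o' h = f \o' h - g \o' h.
Proof. by apply/eqP; rewrite eq_sym subr_eq -comp_addl subrK. Qed.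

Lemma comp0r X Y Z (f : Arr Y Z) : f \o' (0 : Arr X Y) = 0.
Proof. by rewrite -(subrr (0 : Arr X Y)) compBr subrr. Qed.

Lemma comp0l X Y Z (f : Arr X Y) : (0 : Arr Y Z) \o' f = 0.
Proof. by rewrite -(subrr (0 : Arr Y Z)) compBl subrr. Qed.

Lemma section_mono X Y (s : Arr X Y) : is_section s -> is_mono s.
Proof.
move=> [t ts] W a b sab.
by rewrite -(comp_idl a) -(comp_idl b) -ts -!comp_assoc sab.
Qed.

Lemma kernel_factor X Y K W (f : Arr X Y) (k : Arr K X) (g : Arr W X) :
  is_kernel f k -> f \o' g = 0 -> exists h, k \o' h = g.
Proof. by move=> [_ kerk] /kerk [h [kh _]]; exists h. Qed.

Lemma cokernel_factor X Y Q W (f : Arr X Y) (p : Arr Y Q) (g : Arr Y W) :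
  is_cokernel f p -> g \o' f = 0 -> exists h, h \o' p = g.
Proof. by move=> [_ cokp] /cokp [h [hp _]]; exists h. Qed.

Lemma kernel_mono X Y K (f : Arr X Y) (k : Arr K X) :
  is_kernel f k -> is_mono k.
Proof.
move=> [fk0 kerk] W a b ab.
have fka0 : f \o' (k \o' a) = 0 by rewrite comp_assoc fk0 comp0l.
have [h [_ uniq]] := kerk W _ fka0.
by rewrite -(uniq a erefl) (uniq b (esym ab)).
Qed.

Lemma cokernel_epi X Y Q (f : Arr X Y) (p : Arr Y Q) :
  is_cokernel f p -> is_epi p.
Proof.
move=> [pf0 cokp] W a b ab.
have apf0 : a \o' p \o' f = 0 by rewrite -comp_assoc pf0 comp0r.
have [h [_ uniq]] := cokp W _ apf0.
by rewrite -(uniq a erefl) (uniq b (esym ab)).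
Qed.

Lemma comp_fully_invariant0 F M Y (i : Arr F M) (d : Arr M Y) (g : Arr M M) :
  fully_invariant i -> d \o' i = 0 -> d \o' (g \o' i) = 0.
Proof. by move=> [_ /(_ g) [a ->]] di0; rewrite comp_assoc di0 comp0l. Qed.

Lemma section_kernel_compl K M (s : Arr K M) (t : Arr M K) :
  t \o' s = idm K -> is_kernel (idm M - s \o' t) s.
Proof.
move=> ts; split.
  by rewrite compBl comp_idl -comp_assoc ts comp_idr subrr.
move=> W w; rewrite compBl comp_idl => /eqP; rewrite subr_eq0 => /eqP wE.
exists (t \o' w); split; first by rewrite comp_assoc.
by move=> v svw; apply: (section_mono (ex_intro _ t ts)); rewrite svw comp_assoc.
Qed.

Lemma compl_proj_idem K M (s : Arr K M) (t : Arr M K) :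
  t \o' s = idm K ->
  (idm M - s \o' t) \o' (idm M - s \o' t) = idm M - s \o' t.
Proof.
move=> ts; rewrite compBr comp_idr comp_assoc (proj1 (section_kernel_compl ts)).
by rewrite comp0l subr0.
Qed.

(* If d (e w) = 0 then e w factors through i, so e w = e (e w) = 0. *)
Lemma kernel_comp_idem F K M Y (e : Arr M M) (k : Arr K M) (i : Arr F M)
    (d : Arr M Y) :
  is_kernel e k -> e \o' e = e -> e \o' i = 0 -> is_kernel d i ->
  is_kernel (d \o' e) k.
Proof.
move=> kerk ee ei0 keri; split; first by rewrite -comp_assoc (proj1 kerk) comp0r.
move=> W w; rewrite -comp_assoc => /(kernel_factor keri) [h ih].
apply: (proj2 kerk).
by rewrite -[in LHS]ee -comp_assoc -ih comp_assoc ei0 comp0l.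
Qed.

Lemma kernel_retraction_section K M Q (p : Arr M Q) (t : Arr Q M)
    (k : Arr K M) :
  p \o' t = idm Q -> is_kernel p k -> is_section k.
Proof.
move=> pt kerk.
have [r kr] : exists r, k \o' r = idm M - t \o' p.
  by apply: (kernel_factor kerk); rewrite compBr comp_idr comp_assoc pt comp_idl subrr.
exists r; apply: (kernel_mono kerk).
by rewrite comp_assoc kr compBl comp_idl -comp_assoc (proj1 kerk) comp0r subr0 comp_idr.
Qed.

Lemma cokernel_same_image X Y M Q (x : Arr X M) (s : Arr Y M) (p : Arr M Q) :
  is_cokernel x p -> (exists v, x \o' v = s) -> (exists w, s \o' w = x) ->
  is_cokernel s p.
Proof.
move=> [px0 cokp] [v <-] [w sw]; split; first by rewrite comp_assoc px0 comp0l.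
by move=> W g gs0; apply: cokp; rewrite -sw comp_assoc gs0 comp0l.
Qed.

(* The complementary idempotent 1 - s t factors through the cokernel p of s,
   so full coinvariance of p transfers to s. *)
Lemma summand_fully_invariant K M Q (s : Arr K M) (t : Arr M K) (p : Arr M Q) :
  t \o' s = idm K -> is_cokernel s p -> fully_coinvariant p -> fully_invariant s.
Proof.
move=> ts cokp [_ fcp]; split; first exact: section_mono (ex_intro _ t ts).
move=> h; exists (t \o' h \o' s).
have [q qp] := cokernel_factor cokp (proj1 (section_kernel_compl ts)).
have [b pb] := fcp h.
apply/eqP; rewrite -subr_eq0.
have -> : h \o' s - s \o' (t \o' h \o' s) = (idm M - s \o' t) \o' (h \o' s).
  by rewrite compBl comp_idl !comp_assoc.
by rewrite -qp -comp_assoc (comp_assoc p) pb -comp_assoc (proj1 cokp) !comp0r.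
Qed.

Lemma cokernel_fully_coinvariant X K M Q (x : Arr X M) (p : Arr M Q)
    (k : Arr K M) :
  is_cokernel x p -> is_kernel p k -> fully_invariant k -> fully_coinvariant p.
Proof.
move=> cokp kerk [_ fik]; split; first exact: cokernel_epi cokp.
move=> h; have [m km] := kernel_factor kerk (proj1 cokp).
have [a ha] := fik h.
have phx0 : p \o' h \o' x = 0.
  by rewrite -km -comp_assoc (comp_assoc h) ha -comp_assoc comp_assoc (proj1 kerk) comp0l.
by have [b bp] := cokernel_factor cokp phx0; exists b.
Qed.

Lemma strongly_self_F_splitP F M Y (i : Arr F M) (d : Arr M Y) :
  fully_invariant i -> is_kernel d i ->
  strongly_self_F_split i d <->
  self_F_split i d /\
  (forall K (s : Arr K M), direct_summand s -> sub_contains s i -> fully_invariant s).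
Proof.
move=> fii keri; split.
- move=> sss; split=> [g P j kerj | K s [t ts] [u su]].
    by case: (sss g P j kerj).
  have ei0 : (idm M - s \o' t) \o' i = 0.
    by rewrite -su comp_assoc (proj1 (section_kernel_compl ts)) comp0l.
  have kerde := kernel_comp_idem (section_kernel_compl ts) (compl_proj_idem ts) ei0 keri.
  by case: (sss _ K s kerde).
- move=> [ss summ_fi] g P j kerj; have jsec := ss g P j kerj; split=> //.
  apply: summ_fi => //; apply: kernel_factor kerj _.
  by rewrite -comp_assoc; exact: comp_fully_invariant0 fii (proj1 keri).
Qed.

Lemma dual_strongly_self_F_splitP F M Y (i : Arr F M) (d : Arr M Y) :
  has_kernels A -> has_cokernels A -> fully_invariant i -> is_kernel d i ->
  dual_strongly_self_F_split i d <->
  dual_self_F_split i d /\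
  (forall K (s : Arr K M), direct_summand s -> sub_contains i s -> fully_invariant s).
Proof.
move=> kers coks fii keri; split.
- move=> dss; split=> [g Q p cokp | K s [t ts] [u iu]].
    by case: (dss g Q p cokp).
  have [Q [p cokp]] := coks _ _ (s \o' t \o' i).
  apply: (summand_fully_invariant ts (p := p)); last by case: (dss _ Q p cokp).
  apply: cokernel_same_image cokp _ _.
    by exists u; rewrite -comp_assoc iu -comp_assoc ts comp_idr.
  by exists (t \o' i); rewrite comp_assoc.
- move=> [dss summ_fi] g Q p cokp; have [t pt] := dss g Q p cokp.
  split; first by exists t.
  have [K [k kerk]] := kers _ _ p.
  apply: (cokernel_fully_coinvariant cokp kerk).
  apply: summ_fi; first exact: (kernel_retraction_section pt kerk).
  have [q qp] := cokernel_factor cokp (comp_fully_invariant0 g fii (proj1 keri)).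
  by apply: kernel_factor keri _; rewrite -qp -comp_assoc (proj1 kerk) comp0r.
Qed.

End AdditiveCategory.

Theorem theorem3p5 (A : PreAdditiveCategory) (HA : is_abelian A)
  (F M C : A) (i : Arr F M) (d : Arr M C) :
  fully_invariant_ses i d ->
  (strongly_self_F_split i d <->
     self_F_split i d /\
     (forall (K : A) (s : Arr K M),
        direct_summand s -> sub_contains s i -> fully_invariant s)) /\
  (dual_strongly_self_F_split i d <->
     dual_self_F_split i d /\
     (forall (K : A) (s : Arr K M),
        direct_summand s -> sub_contains i s -> fully_invariant s)).
Proof.
move=> [[_ _ keri _] fii]; have [_ [_ [kers [coks _]]]] := HA.
split; [exact: strongly_self_F_splitP | exact: dual_strongly_self_F_splitP].
Qed.
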